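(* Let $\Lambda$ be a lattice of rank $s$ and $\bar a=(a_1,\ldots,a_l)\in(\mathcal F^0(\Lambda,\bar K))^l$. Suppose the convolution ideal generated by $a_1,\ldots,a_l$ in $\mathcal F^0(\Lambda,\bar K)$ contains $s$ nonzero functions $b_1,\ldots,b_s$ with $\mathrm{supp}(b_j)\subseteq\mathbb Zv_j$, $j=1,\ldots,s$, where $v_1,\ldots,v_s\in\Lambda$ are linearly independent. Then every $f\in\bigcap_{j=1}^l\ker(\Delta_{a_j})$ is pluri-periodic, and its period lattice $\Lambda(f)$ contains a rank $s$ sublattice $\sum_{j=1}^sm_j\mathbb Zv_j$ with integers $m_j>0$ depending only on $\bar a$.
   Context: $K=\mathrm{GF}(p^r)$, $\bar K$ an algebraic closure; a lattice is a free abelian group of finite rank. $\mathcal F^0(\Lambda,\bar K)$ is the ring of finitely supported functions $\Lambda\to\bar K$ under convolution $(f*a)(v)=\sum_uf(u)a(v-u)$; $\Delta_a$ acts on all functions $\Lambda\to\bar K$ by $f\mapsto f*a$. The period lattice of $f$ is $\Lambda(f)=\{v\in\Lambda: f(\cdot+v)=f\}$; pluri-periodic means $\Lambda(f)$ has finite index. *)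

From HB Require Import structures.
From mathcomp Require Import all_boot all_order all_algebra.
From mathcomp Require Import finmap.
Set Implicit Arguments. Unset Strict Implicit. Unset Printing Implicit Defensive.
Import Order.TTheory GRing.Theory Num.Theory.
Local Open Scope ring_scope.

(* The lattice Lambda of rank s is modelled as Z^s = 'rV[int]_s. *)
Notation lat s := 'rV[int]_s.

Notation F0 s F := {fsfun lat s -> F with 0}.

(* Delta_a f = f * a, (f * a)(v) = sum_u f(u) a(v - u)
   = sum_{w in supp a} f(v - w) a(w). *)
Definition Delta (F : fieldType) (s : nat) (a : F0 s F) (f : lat s -> F)
  : lat s -> F :=
  fun v => \sum_(w <- finsupp a) f (v - w) * a w.

Definition in_conv_ideal (F : fieldType) (s l : nat) (a : 'I_l -> F0 s F)
  (b : F0 s F) : Prop :=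
  exists c : 'I_l -> F0 s F,
    forall v, b v = \sum_(j < l) Delta (a j) (fun u => c j u) v.

Definition period_lattice (F : fieldType) (s : nat) (f : lat s -> F)
  : lat s -> Prop :=
  fun v => forall x, f (x + v) = f x.

Definition finite_index (s : nat) (L : lat s -> Prop) : Prop :=
  exists R : seq (lat s), forall v, exists2 r, r \in R & L (v - r).

Definition pluri_periodic (F : fieldType) (s : nat) (f : lat s -> F) : Prop :=
  finite_index (period_lattice f).

(* F is an algebraic closure of GF(p^r): algebraically closed of
   characteristic p, and algebraic over GF(p^r) (each element lies in
   some GF(p^(r n)), n > 0). *)
Definition alg_closure_GF (F : closedFieldType) (p r : nat) : Prop :=
  [/\ prime p, p \in [pchar F], (0 < r)%N &
      forall x : F, exists2 n : nat, (0 < n)%N & x ^+ (p ^ (r * n)) = x].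

From HB Require Import structures.
From mathcomp Require Import all_boot all_order all_algebra.
From mathcomp Require Import finmap.
From mathcomp Require Import zify.
Set Implicit Arguments. Unset Strict Implicit. Unset Printing Implicit Defensive.
Import Order.TTheory GRing.Theory Num.Theory.
Local Open Scope ring_scope.

(* A function killed by every [Delta (a j)] is killed by [Delta b] for every
   [b] in the convolution ideal, by associativity of convolution; in particular
   by [Delta (b j)].  As [b j] is supported on the line [Z v_j], this says that
   along every line [x + Z v_j] the function satisfies a linear recurrence.
   Over the algebraic closure of a finite field the nonzero roots of its
   characteristic polynomial are roots of unity, so that polynomial divides
   [X^t (X^m - 1)] and the recurrence forces the period [m v_j].  The periods
   [m_j v_j] are independent, so by Cramer's rule a nonzero multiple [D Lambda]
   lies in the lattice they span, which therefore has finite index. *)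

Section Convolution.
Variables (F : fieldType) (s : nat).
Implicit Types (a b c : F0 s F) (f : lat s -> F).

Lemma Delta_fset_incl (X : {fset lat s}) a f y : (finsupp a `<=` X)%fset ->
  Delta a f y = \sum_(w <- X) f (y - w) * a w.
Proof. by move=> aX; apply: big_fset_incl => // w _ /fsfun_dflt ->; rewrite mulr0. Qed.

Definition conv_supp a c : {fset lat s} :=
  [fset (u + w)%R | u in finsupp c, w in finsupp a]%fset.

Lemma Delta_convA a c f y (X : {fset lat s}) : (conv_supp a c `<=` X)%fset ->
  \sum_(x <- X) f (y - x) * Delta a c x =
  \sum_(u <- finsupp c) c u * Delta a f (y - u).
Proof.
move=> acX; under eq_bigr do rewrite /Delta mulr_sumr.
under [RHS]eq_bigr do rewrite /Delta mulr_sumr.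
rewrite exchange_big [RHS]exchange_big /=; apply: eq_big_seq => w wa.
have cwX : ([fset (u + w)%R | u in finsupp c] `<=` X)%fset.
  apply/fsubsetP => _ /imfsetP[u /= uc ->]; apply: (fsubsetP acX).
  by rewrite /conv_supp in_imfset2.
rewrite -(big_fset_incl _ cwX) ?big_imfset /=.
- by apply: eq_bigr => u _; rewrite addrK opprD addrA mulrCA.
- by move=> u u' _ _; apply: addIr.
move=> x _ xNcw; rewrite fsfun_dflt ?mul0r ?mulr0 //.
by apply: contra xNcw => xwc; apply/imfsetP; exists (x - w); rewrite ?subrK.
Qed.

Lemma Delta_ideal_eq0 l (a : 'I_l -> F0 s F) b f :
  in_conv_ideal a b -> (forall j, Delta (a j) f = (fun=> 0)) ->
  forall y, Delta b f y = 0.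
Proof.
move=> [c bE] af0 y.
pose X := (finsupp b `|` \bigcup_(j <- enum 'I_l) conv_supp (a j) (c j))%fset.
rewrite (@Delta_fset_incl X) ?fsubsetUl //.
under eq_bigr do rewrite bE mulr_sumr.
rewrite exchange_big /=; apply: big1 => j _.
rewrite Delta_convA; first by apply: big1 => u _; rewrite af0 mulr0.
apply: fsubset_trans (fsubsetUr _ _).
by apply: bigfcup_sup; rewrite ?mem_enum.
Qed.

End Convolution.

Section ShiftOperator.
Variable R : ringType.
Implicit Types (P Q : {poly R}) (g : int -> R) (n : int).

(* [P(E) g] at [n] for the shift [E g = g (_ + 1)], as long as [size P <= N]. *)
Definition shift_op (N : nat) P g n : R := \sum_(i < N) P`_i * g (n + i%:Z).

Lemma shift_opB N P Q g n :
  shift_op N (P - Q) g n = shift_op N P g n - shift_op N Q g n.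
Proof. by rewrite /shift_op -sumrB; apply: eq_bigr => i _; rewrite coefB mulrBl. Qed.

Lemma shift_opZ N c P g n : shift_op N (c *: P) g n = c * shift_op N P g n.
Proof. by rewrite /shift_op mulr_sumr; apply: eq_bigr => i _; rewrite coefZ mulrA. Qed.

Lemma shift_op_sum (I : Type) (r : seq I) (Ps : I -> {poly R}) N g n :
  shift_op N (\sum_(i <- r) Ps i) g n = \sum_(i <- r) shift_op N (Ps i) g n.
Proof.
rewrite /shift_op; under eq_bigr do rewrite coef_sum mulr_suml.
by rewrite exchange_big.
Qed.

Lemma shift_opXn N k g n : (k < N)%N -> shift_op N 'X^k g n = g (n + k%:Z).
Proof.
move=> kN; rewrite /shift_op (bigD1 (Ordinal kN)) //= coefXn eqxx mul1r.
rewrite big1 ?addr0 // => i /eqP ik; rewrite coefXn.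
by case: eqP => [ik'|_]; [case: ik; apply: val_inj | rewrite mul0r].
Qed.

Lemma shift_op_widen N P g n :
  (size P <= N)%N -> shift_op N P g n = shift_op (size P) P g n.
Proof.
move=> PN; rewrite /shift_op -(subnKC PN) big_split_ord /=.
by rewrite [X in _ + X]big1 ?addr0 // => i _; rewrite nth_default ?mul0r ?leq_addr.
Qed.

Lemma shift_opXnM k N P g n :
  shift_op (k + N) ('X^k * P) g n = shift_op N P g (n + k%:Z).
Proof.
rewrite /shift_op big_split_ord /= big1 ?add0r => [|i _].
  apply: eq_bigr => i _; rewrite coefXnM ltnNge leq_addr /= addKn.
  by rewrite PoszD addrA.
by rewrite coefXnM ltn_ord mul0r.
Qed.

Lemma shift_op_mull Q P g N n : (forall n, shift_op (size P) P g n = 0) ->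
  (size Q + size P <= N)%N -> shift_op N (Q * P) g n = 0.
Proof.
move=> Pg0 QPN; rewrite -[Q]coefK poly_def mulr_suml shift_op_sum.
apply: big1 => i _; rewrite -scalerAl shift_opZ.
have XiP_size : (size ('X^i * P)%R <= i + size P)%N.
  by apply: leq_trans (size_polyMleq _ _) _; rewrite size_polyXn.
rewrite shift_op_widen; last first.
  by apply: leq_trans XiP_size _; have := ltn_ord i; lia.
by rewrite -(shift_op_widen _ _ XiP_size) shift_opXnM Pg0 mulr0.
Qed.

End ShiftOperator.

Lemma annihilator_dvdp_periodic (R : fieldType) (P : {poly R}) t m g :
  (forall n, shift_op (size P) P g n = 0) -> P %| 'X^t * ('X^m - 1) ->
  forall n, g (n + m%:Z) = g n.
Proof.
move=> Pg0 /dvdpP[Q QPE] n.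
have := shift_op_mull (Q := Q) (n - t%:Z) Pg0
  (leq_addr (t + m).+1 (size Q + size P)).
rewrite -QPE mulrBr mulr1 -exprD shift_opB !shift_opXn; try lia.
by move=> /eqP; rewrite subr_eq0 PoszD addrA subrK => /eqP.
Qed.

Lemma expr_cycle_mul (R : pzSemiRingType) (z : R) k j :
  z ^+ k.+1 = z -> z ^+ (k * j).+1 = z.
Proof.
move=> zk; elim: j => [|j IHj]; first by rewrite muln0 expr1.
by rewrite mulnS addnC -addSn exprD IHj -exprS zk.
Qed.

Lemma alg_closure_GF_expr_cycle (F : closedFieldType) p r (rs : seq F) :
  alg_closure_GF F p r ->
  exists2 M : nat, (0 < M)%N & {in rs, forall z, z ^+ M.+1 = z}.
Proof.
case=> p_pr _ r_gt0 Frob_fixed.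
elim: rs => [|z rs [M M_gt0 rsM]]; first by exists 1%N.
have [n n_gt0 zq] := Frob_fixed z.
have q_gt1 : (1 < p ^ (r * n))%N.
  by rewrite -{1}(expn0 p) ltn_exp2l ?prime_gt1 // muln_gt0 r_gt0.
have zq' : z ^+ (p ^ (r * n)).-1.+1 = z by rewrite prednK ?(ltnW q_gt1).
exists (M * (p ^ (r * n)).-1)%N; first by rewrite muln_gt0 M_gt0 -subn1 subn_gt0.
move=> y /predU1P[->|/rsM yM]; last exact: expr_cycle_mul.
by rewrite mulnC; apply: expr_cycle_mul.
Qed.

Lemma dvdp_prod_XsubC_exp (F : fieldType) (rs : seq F) (q : {poly F}) :
  {in rs, forall z, 'X - z%:P %| q} ->
  \prod_(z <- rs) ('X - z%:P) %| q ^+ size rs.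
Proof.
elim: rs => [|z rs IHrs] rs_q; first by rewrite big_nil dvd1p.
rewrite big_cons exprS dvdp_mul ?rs_q ?mem_head // IHrs // => y yrs.
by rewrite rs_q // inE yrs orbT.
Qed.

(* Every root of [P] satisfies [z ^+ M.+1 = z], so [P] divides a power of
   [X^(M+1) - X]; raised to a power [N] of [p] this is, by Frobenius,
   [X^N * (X^(M N) - 1)]. *)
Lemma dvdp_Xn_unity (F : closedFieldType) p r (P : {poly F}) :
  alg_closure_GF F p r -> P != 0 ->
  exists2 m : nat, (0 < m)%N & exists t : nat, P %| 'X^t * ('X^m - 1).
Proof.
move=> hF P0; have [p_pr p_char _ _] := hF.
have [rs Prs] := closed_field_poly_normal P.
have [M M_gt0 rsM] := alg_closure_GF_expr_cycle rs hF.
pose N := (p ^ size rs)%N.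
have p_char_poly : p \in [pchar {poly F}] by rewrite pchar_poly.
have N_char : [pchar {poly F}].-nat N.
  by rewrite (eq_pnat _ (pcharf_eq p_char_poly)) pnatX pnat_id.
exists (M * N)%N; first by rewrite muln_gt0 M_gt0 expn_gt0 prime_gt0.
exists N; have <- : ('X^(M.+1) - 'X) ^+ N = 'X^N * ('X^(M * N) - 1) :> {poly F}.
  rewrite exprDn_pchar // exprNn_pchar // -exprM mulrBr mulr1 -exprD.
  by rewrite mulSn addnC.
rewrite Prs dvdpZl ?lead_coef_eq0 //.
apply: dvdp_trans (dvdp_exp2l _ (ltnW (ltn_expl _ (prime_gt1 p_pr)))).
apply: dvdp_prod_XsubC_exp => z /rsM zM.
by rewrite dvdp_XsubCl /root !hornerE zM subrr.
Qed.

Lemma scale_line_inj s (v : lat s) : v != 0 -> injective (fun k : int => k *: v).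
Proof.
move=> v0 k k' /eqP; rewrite -subr_eq0 -scalerBl scalemx_eq0 (negbTE v0) orbF.
by rewrite subr_eq0 => /eqP.
Qed.

Lemma line_coords_bounded s (v : lat s) (S : seq (lat s)) :
  {in S, forall w, exists k : int, w = k *: v} ->
  exists K : nat, {in S, forall w, exists2 k : int, (`|k| <= K)%N & w = k *: v}.
Proof.
elim: S => [|w S IHS] S_line; first by exists 0%N.
have [k ->] := S_line w (mem_head _ _).
have [|K SK] := IHS; first by move=> x xS; apply: S_line; rewrite inE xS orbT.
exists (maxn K `|k|) => x /predU1P[->|/SK[k' k'K ->]].
  by exists k; rewrite ?leq_maxr.
by exists k'; rewrite // leq_max k'K.
Qed.

(* The Laurent polynomial [\sum_k b (k v) X^k] of [b] along [v], times [X^K];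
   it is a polynomial as soon as [K] bounds the support of [b]. *)
Definition line_poly (F : fieldType) s (b : F0 s F) (v : lat s) (K : nat)
  : {poly F} :=
  \poly_(i < K.*2.+1) b ((i%:Z - K%:Z) *: v).

Section LinePoly.
Variables (F : fieldType) (s : nat) (b : F0 s F) (v : lat s) (K : nat).
Hypotheses (v_neq0 : v != 0)
  (b_line : {in finsupp b,
             forall w, exists2 k : int, (`|k| <= K)%N & w = k *: v}).

Lemma finsupp_line_index w :
  w \in finsupp b -> exists i : 'I_K.*2.+1, w = (i%:Z - K%:Z) *: v.
Proof.
move=> /b_line[k kK ->].
have kK_lt : (absz (k + K%:Z)%R < K.*2.+1)%N by rewrite -addnn; lia.
by exists (Ordinal kK_lt); rewrite /= gez0_abs ?addrK //; lia.
Qed.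

Lemma Delta_line_poly f y : Delta b f y =
  \sum_(i < K.*2.+1) f (y - (i%:Z - K%:Z) *: v) * (line_poly b v K)`_i.
Proof.
pose X := [fset ((nat_of_ord i)%:Z - K%:Z) *: v | i : 'I_K.*2.+1]%fset.
rewrite (@Delta_fset_incl _ _ X).
  rewrite big_imfset /= ?big_enum => [|i j _ _ /scale_line_inj-/(_ v_neq0)/addIr/eqP].
    by apply: eq_bigr => i _; rewrite coef_poly ltn_ord.
  by rewrite eqz_nat => /eqP/val_inj.
apply/fsubsetP => w /finsupp_line_index[i ->]; exact: in_imfset.
Qed.

Lemma line_poly_neq0 : (exists u, b u != 0) -> line_poly b v K != 0.
Proof.
move=> [u bu].
have /finsupp_line_index[i uE] : u \in finsupp b by rewrite mem_finsupp.
have Pi : (line_poly b v K)`_i = b u by rewrite coef_poly ltn_ord uE.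
by apply: contra_neq bu => P0; rewrite -Pi P0 coef0.
Qed.

Lemma line_poly_annihilator f x : (forall y, Delta b f y = 0) ->
  forall n, shift_op (size (line_poly b v K)) (line_poly b v K)
                     (fun n => f (x - n *: v)) n = 0.
Proof.
move=> bf0 n; rewrite -(@shift_op_widen _ K.*2.+1) ?size_poly //.
rewrite -(bf0 (x - (n + K%:Z) *: v)).
rewrite Delta_line_poly; apply: eq_bigr => i _.
by rewrite mulrC -addrA -opprD -scalerDl addrACA subrr addr0.
Qed.
End LinePoly.

Lemma line_period (F : closedFieldType) p r s (b : F0 s F) (v : lat s) :
  alg_closure_GF F p r -> v != 0 -> (exists u, b u != 0) ->
  (forall w, b w != 0 -> exists k : int, w = k *: v) ->
  exists2 m : nat, (0 < m)%N &
    forall f, (forall y, Delta b f y = 0) -> period_lattice f (m%:Z *: v).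
Proof.
move=> hF v0 b_nz b_line.
have [|K bK] := @line_coords_bounded _ v (finsupp b).
  by move=> w; rewrite mem_finsupp => /b_line.
have [m m_gt0 [t Pdvd]] := dvdp_Xn_unity hF (line_poly_neq0 v0 bK b_nz).
exists m => // f bf0 x.
have := line_poly_annihilator v0 bK (x + m%:Z *: v) bf0.
move=> /annihilator_dvdp_periodic/(_ Pdvd 0).
by rewrite /= add0r scale0r subr0 addrK.
Qed.

Section PeriodLattice.
Variables (F : fieldType) (s : nat) (f : lat s -> F).

Lemma period_latticeD u w :
  period_lattice f u -> period_lattice f w -> period_lattice f (u + w).
Proof. by move=> fu fw x; rewrite addrA fw fu. Qed.

Lemma period_latticeZ w (k : int) : period_lattice f w -> period_lattice f (k *: w).
Proof.
move=> fw; have fnw (n : nat) : period_lattice f (n%:Z *: w).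
  elim: n => [|n IHn] x; first by rewrite scale0r addr0.
  by rewrite -[n.+1]addn1 PoszD scalerDl scale1r addrA fw IHn.
case: k => n; first exact: fnw.
by move=> x; rewrite NegzE scaleNr -{2}(subrK (n.+1%:Z *: w) x) fnw.
Qed.

Lemma period_lattice_comb n (w : 'I_n -> lat s) (c : 'I_n -> int) :
  (forall j, period_lattice f (w j)) -> period_lattice f (\sum_(j < n) c j *: w j).
Proof.
move=> fw; apply: big_ind => [x|u u'|j _]; first by rewrite addr0.
  exact: period_latticeD.
exact: period_latticeZ.
Qed.
End PeriodLattice.

Lemma finite_index_scale s (L : lat s -> Prop) (D : int) :
  D != 0 -> (forall z, L (D *: z)) -> finite_index L.
Proof.
move=> D0 LD; pose N := absz D.
exists [seq map_mx (fun i : 'I_N.+1 => (i : nat)%:Z) g | g <- enum {: 'rV['I_N.+1]_s}].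
move=> y; pose rho : lat s := \row_i modz (y 0 i) D.
exists rho.
  apply/mapP; exists (\row_i (inord (absz (modz (y 0 i) D)) : 'I_N.+1)).
    by rewrite mem_enum.
  apply/matrixP => i0 i; rewrite !mxE inordK; first by rewrite gez0_abs // modz_ge0.
  by have := ltz_mod (y 0 i) D0; have := modz_ge0 (y 0 i) D0; rewrite /N; lia.
have -> : y - rho = D *: \row_i divz (y 0 i) D.
  by apply/matrixP => i0 i; rewrite ord1 !mxE {1}(divz_eq (y 0 i) D) addrK mulrC.
exact: LD.
Qed.

Definition lin_indep n s (w : 'I_n -> lat s) :=
  forall c : 'I_n -> int, \sum_(j < n) c j *: w j = 0 -> forall j, c j = 0.

Lemma lin_indep_neq0 n s (w : 'I_n -> lat s) : lin_indep w -> forall j, w j != 0.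
Proof.
move=> w_indep j; apply/eqP => wj0.
suff /eqP : ((j == j)%:R : int) = 0 by rewrite eqxx oner_eq0.
apply: (w_indep (fun i => (i == j)%:R)).
by rewrite (bigD1 j) //= wj0 scaler0 add0r big1 // => i /negbTE->; rewrite scale0r.
Qed.

Lemma lin_indep_scale n s (w : 'I_n -> lat s) (m : 'I_n -> int) :
  lin_indep w -> (forall j, m j != 0) -> lin_indep (fun j => m j *: w j).
Proof.
move=> w_indep m0 c cw0 j; apply/eqP.
suff /eqP : c j * m j = 0 by rewrite mulf_eq0 (negbTE (m0 j)) orbF.
apply: (w_indep (fun j => c j * m j)).
by rewrite -[RHS]cw0; apply: eq_bigr => i _; rewrite scalerA.
Qed.

Lemma lin_indep_full_rank s (w : 'I_s -> lat s) : lin_indep w ->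
  exists2 D : int, D != 0 &
    forall z, exists c : 'I_s -> int, D *: z = \sum_(j < s) c j *: w j.
Proof.
move=> w_indep; pose W : 'M[int]_s := \matrix_j w j.
have W_row u : u *m W = \sum_(j < s) u 0 j *: w j.
  by rewrite mulmx_sum_row; apply: eq_bigr => j _; rewrite rowK.
exists (\det W).
  apply/det0P => -[u u_neq0]; rewrite W_row => /w_indep u0.
  by case/eqP: u_neq0; apply/matrixP => i j; rewrite ord1 u0 mxE.
move=> z; exists (fun j => (z *m \adj W) 0 j).
by rewrite -W_row -mulmxA mul_adj_mx mul_mx_scalar.
Qed.

Theorem corollary5p7 (F : closedFieldType) (p r s l : nat)
  (hF : alg_closure_GF F p r)
  (a : 'I_l -> F0 s F)
  (b : 'I_s -> F0 s F) (v : 'I_s -> lat s)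
  (hbI : forall j, in_conv_ideal a (b j))
  (hb0 : forall j, exists u, b j u != 0)
  (hbsupp : forall j w, b j w != 0 -> exists k : int, w = k *: v j)
  (hv : forall c : 'I_s -> int,
        \sum_(j < s) c j *: v j = 0 -> forall j, c j = 0) :
  exists m : 'I_s -> nat,
    (forall j, (0 < m j)%N) /\
    forall f : lat s -> F,
      (forall j, Delta (a j) f = (fun _ => 0)) ->
      pluri_periodic f /\
      forall k : 'I_s -> int,
        period_lattice f (\sum_(j < s) (k j * (m j)%:Z) *: v j).
Proof.
have [m m_gt0 m_period] := fin_all_exists2 (fun j =>
  line_period hF (lin_indep_neq0 hv j) (hb0 j) (hbsupp j)).
exists m; split=> // f af0.
have f_period j : period_lattice f ((m j)%:Z *: v j).
  exact: m_period (Delta_ideal_eq0 (hbI j) af0).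
split=> [|k]; last first.
  by under eq_bigr do rewrite -scalerA; exact: period_lattice_comb.
have m_neq0 j : (m j)%:Z != 0 by rewrite eqz_nat -lt0n.
have [D D0 DE] := lin_indep_full_rank (lin_indep_scale hv m_neq0).
apply: (finite_index_scale D0) => z; have [c ->] := DE z.
exact: period_lattice_comb.
Qed.
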